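(* For any efficient domination graph $G$, $\gamma_{qtR}(G)\le 3\rho(G)$.
   Context: All graphs are finite, simple and undirected. A set $B\subseteq V(G)$ is a packing if $N[u]\cap N[v]=\emptyset$ for all distinct $u,v\in B$; the packing number $\rho(G)$ is the maximum size of a packing. $G$ is an efficient domination graph if $\rho(G)=\gamma(G)$, where $\gamma(G)$ is the domination number. For $f:V(G)\to\{0,1,2\}$ write $V_i=\{v:f(v)=i\}$; weight $\omega(f)=|V_1|+2|V_2|$. A quasi-total Roman dominating function (QTRDF) is an $f$ such that every vertex labeled $0$ is adjacent to a vertex labeled $2$, and every vertex isolated in the subgraph induced by $V_1\cup V_2$ has label $1$; $\gamma_{qtR}(G)$ is the minimum weight of a QTRDF. *)

From mathcomp Require Import all_boot all_order.
Set Implicit Arguments. Unset Strict Implicit. Unset Printing Implicit Defensive.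

Definition simple_graph (T : finType) (e : rel T) : Prop :=
  symmetric e /\ irreflexive e.

Section Graph.
Variables (T : finType) (e : rel T).

Definition cnbh (v : T) : {set T} := [set u | (u == v) || e v u].

Definition dominating (D : {set T}) : bool :=
  [forall v, [exists u in D, v \in cnbh u]].

Definition packing (B : {set T}) : bool :=
  [forall u in B, forall v in B, (u != v) ==> [disjoint cnbh u & cnbh v]].

Definition gamma : nat :=
  #|[arg min_(D < setT | dominating D) #|D|]|.

Definition rho : nat :=
  #|[arg max_(B > set0 | packing B) #|B|]|.

Definition efficient_domination_graph : Prop := rho = gamma.

Definition weight (f : {ffun T -> 'I_3}) : nat := \sum_(v : T) (f v : nat).

(* QTRDF: every vertex labelled 0 has a neighbour labelled 2, and every vertex
   isolated in the subgraph induced by V1 ∪ V2 (i.e. a vertex of V1 ∪ V2 with no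
   neighbour in V1 ∪ V2) is labelled 1. *)
Definition qtrdf (f : {ffun T -> 'I_3}) : bool :=
  [forall v, ((f v : nat) == 0) ==> [exists u, e v u && ((f u : nat) == 2)]] &&
  [forall v, (((f v : nat) != 0) && ~~ [exists u, e v u && ((f u : nat) != 0)])
               ==> ((f v : nat) == 1)].

Definition one3 : 'I_3 := inord 1.
Definition fone : {ffun T -> 'I_3} := [ffun => one3].

(* quasi-total Roman domination number (fone is a QTRDF) *)
Definition gamma_qtR : nat :=
  weight [arg min_(f < fone | qtrdf f) weight f].

End Graph.

From mathcomp Require Import all_boot all_order.

Set Implicit Arguments.
Unset Strict Implicit.
Unset Printing Implicit Defensive.

(* A minimum dominating set D already gives a cheap quasi-total Roman
   dominating function: label 2 every vertex of D that has a neighbour, and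
   label 1 one chosen neighbour of each of them as well as the isolated
   vertices of D.  A vertex labelled 0 lies outside D, so its dominator in D
   has a neighbour and is labelled 2; a vertex labelled 2 is never isolated in
   V1 \cup V2 because its chosen neighbour is labelled.  The weight is at most
   2|D| + |D| = 3 gamma, and gamma = rho for an efficient domination graph. *)

Section QuasiTotalRoman.
Variables (T : finType) (e : rel T).

Lemma qtrdf_fone : qtrdf e (fone T).
Proof.
have one3E : (one3 : nat) = 1 by rewrite /one3 inordK.
by apply/andP; split; apply/forallP => v; rewrite ffunE one3E //; apply/implyP.
Qed.

Lemma gamma_qtR_min (f : {ffun T -> 'I_3}) : qtrdf e f -> gamma_qtR e <= weight f.
Proof.
move=> qf; rewrite /gamma_qtR.
by case: (arg_minnP (@weight T) qtrdf_fone) => g _ /(_ f qf).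
Qed.

Lemma gamma_min_dominating : exists2 D, dominating e D & #|D| = gamma e.
Proof.
have domT : dominating e [set: T].
  by apply/forallP => v; apply/existsP; exists v; rewrite in_setT inE eqxx.
rewrite /gamma; case: (arg_minnP (fun D : {set T} => #|D|) domT) => D domD _.
by exists D.
Qed.

Definition nbr (v : T) : T := odflt v [pick u | e v u].

Lemma nbr_adj (v u : T) : e v u -> e v (nbr v).
Proof. by rewrite /nbr; case: pickP => [//|/(_ u) ->]. Qed.

Lemma nbr_isolated (v : T) : ~~ [exists u, e v u] -> nbr v = v.
Proof.
move/existsPn=> noadj; rewrite /nbr; case: pickP => [u evu|//].
by have := noadj u; rewrite evu.
Qed.

Variable D : {set T}.

Definition dom_label (u : T) : nat :=
  if (u \in D) && [exists w, e u w] then 2 else if u \in nbr @: D then 1 else 0.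

Definition qtrdf_of_dom : {ffun T -> 'I_3} := [ffun u => inord (dom_label u)].

Lemma qtrdf_of_domE (u : T) : (qtrdf_of_dom u : nat) = dom_label u.
Proof. by rewrite ffunE inordK // /dom_label; case: ifP => //; case: ifP. Qed.

Lemma dom_label_eq0 (v : T) : dom_label v = 0 -> v \notin D.
Proof.
rewrite /dom_label; case: ifPn => // noadj; case: ifPn => // notS _.
apply: contra notS => vD; have [adj|isol] := boolP [exists w, e v w].
  by rewrite vD adj in noadj.
by rewrite -{1}(nbr_isolated isol) imset_f.
Qed.

Lemma qtrdf_qtrdf_of_dom : symmetric e -> dominating e D -> qtrdf e qtrdf_of_dom.
Proof.
move=> esym domD; apply/andP; split; apply/forallP => v; rewrite qtrdf_of_domE.
- apply/implyP => /eqP/dom_label_eq0 vD.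
  have /existsP [u /andP [uD]] := forallP domD v.
  rewrite inE => /orP [/eqP vu | euv]; first by rewrite vu uD in vD.
  apply/existsP; exists u; rewrite esym euv qtrdf_of_domE /dom_label uD /=.
  by have -> : [exists w, e u w] by apply/existsP; exists v.
- apply/implyP => /andP [+ /existsPn noadj]; rewrite /dom_label.
  case: ifP => [/andP [vD /existsP [w evw]] _ | _]; last by case: ifP.
  have := noadj (nbr v); rewrite (nbr_adj evw) qtrdf_of_domE /dom_label.
  by rewrite imset_f //; case: ifP.
Qed.

Lemma weight_qtrdf_of_dom : weight qtrdf_of_dom <= 3 * #|D|.
Proof.
have cardE (A : {set T}) : \sum_(v : T) (v \in A : nat) = #|A|.
  by rewrite -sum1_card [RHS]big_mkcond; apply: eq_bigr => v _; case: (v \in A).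
apply: (@leq_trans (\sum_(v : T) (2 * (v \in D) + (v \in nbr @: D)))).
  apply: leq_sum => v _; rewrite qtrdf_of_domE /dom_label.
  by case: ifP => [/andP [-> _] | _] //; case: ifP => _; rewrite ?addn1.
rewrite big_split /= -big_distrr /= !cardE mulSn addnC leq_add2r.
exact: leq_imset_card.
Qed.

End QuasiTotalRoman.

Lemma gamma_qtR_le_3gamma (T : finType) (e : rel T) :
  symmetric e -> gamma_qtR e <= 3 * gamma e.
Proof.
move=> esym; have [D domD <-] := gamma_min_dominating e.
apply: leq_trans (weight_qtrdf_of_dom e D).
exact/gamma_qtR_min/qtrdf_qtrdf_of_dom.
Qed.

Theorem mainTheorem9 (T : finType) (e : rel T) :
  simple_graph e -> efficient_domination_graph e ->
  gamma_qtR e <= 3 * rho e.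
Proof.
move=> [esym _] ->.
exact: gamma_qtR_le_3gamma.
Qed.
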